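(* Consider ${\sf BubbleRank}$ (defined below) run with parameter $\delta\in(0,1)$ in a stochastic click bandit satisfying A1–A5 with $\alpha(1)>\dots>\alpha(K)>0$, and let $$\mathbf{P}_t=\{(i,j)\in[K]^2: i<j,\ |\bar{\mathbf{R}}_t^{-1}(i)-\bar{\mathbf{R}}_t^{-1}(j)|=1,\ \mathbf{s}_{t-1}(i,j)\le2\sqrt{\mathbf{n}_{t-1}(i,j)\log(1/\delta)}\}.$$ Then on the event $\mathcal{E}$ defined below, for every $t\in[n]$, $$\sum_{k=1}^K\big(\chi(\mathcal{R}^*,k)\alpha(k)-\chi(\mathbf{R}_t,k)\alpha(\mathbf{R}_t(k))\big)\le3K\chi_{\max}\sum_{i=1}^K\sum_{j=i+1}^K\mathbb{1}\{(i,j)\in\mathbf{P}_t\}(\alpha(i)-\alpha(j)).$$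
   Context: Model. Items $[K]$; a list $\mathcal{R}$ orders all $K$ items, $\mathcal{R}(k)$ is the item at position $k$, $\mathcal{R}^{-1}(i)$ the position of $i$; $\Pi_K$ the set of lists. At time $t$, $(\mathbf{A}_t,\mathbf{X}_t)\in\{0,1\}^K\times\{0,1\}^{\Pi_K\times[K]}$ is drawn i.i.d. from a product distribution; the learner displays $\mathbf{R}_t$ and observes $\mathbf{c}_t(k)=\mathbf{X}_t(\mathbf{R}_t,k)\mathbf{A}_t(\mathbf{R}_t(k))$. $\alpha=\mathbb{E}[\mathbf{A}_t]$, $\chi=\mathbb{E}[\mathbf{X}_t]$, $r(\mathcal{R},\alpha,\chi)=\sum_k\chi(\mathcal{R},k)\alpha(\mathcal{R}(k))$, $\mathcal{R}^*=(1,\dots,K)$, $\chi_{\max}=\chi(\mathcal{R}^*,1)$. Assumptions for all lists $\mathcal{R},\mathcal{R}'$ and positions $k<\ell$: (A1) $r(\mathcal{R},\alpha,\chi)\le r(\mathcal{R}^*,\alpha,\chi)$; (A2) $\{\mathcal{R}(1..k-1)\}=\{\mathcal{R}'(1..k-1)\}\Rightarrow\chi(\mathcal{R},k)=\chi(\mathcal{R}',k)$; (A3) $\chi(\mathcal{R},k)\ge\chi(\mathcal{R},\ell)$; (A4) if $\mathcal{R},\mathcal{R}'$ differ only by exchanging items at positions $k,\ell$, then $\alpha(\mathcal{R}(k))\le\alpha(\mathcal{R}(\ell))\iff\chi(\mathcal{R},\ell)\ge\chi(\mathcal{R}',\ell)$; (A5) $\chi(\mathcal{R},k)\ge\chi(\mathcal{R}^*,k)$.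 Algorithm ${\sf BubbleRank}$ (initial list $\mathcal{R}_0$, horizon $n$): $\mathbf{s}_0\equiv\mathbf{n}_0\equiv0$, $\bar{\mathbf{R}}_1=\mathcal{R}_0$. For $t=1,\dots,n$: $h=t\bmod2$, $\mathbf{R}_t\leftarrow\bar{\mathbf{R}}_t$; for $k=1,\dots,\lfloor(K-h)/2\rfloor$ with $i=\mathbf{R}_t(2k-1+h)$, $j=\mathbf{R}_t(2k+h)$: if $\mathbf{s}_{t-1}(i,j)\le2\sqrt{\mathbf{n}_{t-1}(i,j)\log(1/\delta)}$ exchange these two positions with probability $1/2$. Display $\mathbf{R}_t$, observe $\mathbf{c}_t$. $\mathbf{s}_t=\mathbf{s}_{t-1}$, $\mathbf{n}_t=\mathbf{n}_{t-1}$; for each such $k$ with $i=\mathbf{R}_t(2k-1+h)$, $j=\mathbf{R}_t(2k+h)$: if $|\mathbf{c}_t(2k-1+h)-\mathbf{c}_t(2k+h)|=1$, add $\mathbf{c}_t(2k-1+h)-\mathbf{c}_t(2k+h)$ to $\mathbf{s}_t(i,j)$, its negative to $\mathbf{s}_t(j,i)$, and $1$ to $\mathbf{n}_t(i,j),\mathbf{n}_t(j,i)$. Then $\bar{\mathbf{R}}_{t+1}=\bar{\mathbf{R}}_t$; for $k=1,\dots,K-1$ in order with $i=\bar{\mathbf{R}}_{t+1}(k)$, $j=\bar{\mathbf{R}}_{t+1}(k+1)$: if $\mathbf{s}_t(j,i)>2\sqrt{\mathbf{n}_t(j,i)\log(1/\delta)}$ exchange positions $k,k+1$ of $\bar{\mathbf{R}}_{t+1}$.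 Event $\mathcal{E}=\bigcap_{t\in[n]}(\mathcal{E}_{t,1}\cap\mathcal{E}_{t,2})$, where $\mathcal{E}_{t,1}$: for all $i<j$, $\frac{\alpha(i)-\alpha(j)}{\alpha(i)+\alpha(j)}\mathbf{n}_t(i,j)-2\sqrt{\mathbf{n}_t(i,j)\log(1/\delta)}\le\mathbf{s}_t(i,j)$; and $\mathcal{E}_{t,2}$: for all $i>j$, $\mathbf{s}_t(i,j)\le2\sqrt{\mathbf{n}_t(i,j)\log(1/\delta)}$. *)

(* items/positions are 'I_K (item i+1 of the paper = ordinal i,
   position k+1 of the paper = ordinal k); lists are permutations {perm 'I_K},
   R p = item at position p, (R^-1) i = position of item i. *)
From HB Require Import structures.
From mathcomp Require Import all_boot all_order fingroup perm all_algebra.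
From mathcomp Require Import reals exp.
Set Implicit Arguments. Unset Strict Implicit. Unset Printing Implicit Defensive.
Import Order.TTheory GRing.Theory Num.Theory.
Local Open Scope ring_scope.

Section BubbleRank.
Variable K : nat.
Variable R : realType.

Definition reward (alpha : 'I_K -> R) (chi : {perm 'I_K} -> 'I_K -> R)
  (L : {perm 'I_K}) : R := \sum_(k < K) chi L k * alpha (L k).

Definition swap_pos (L : {perm 'I_K}) (k l : 'I_K) : {perm 'I_K} :=
  (tperm k l * L)%g.

Definition Rstar : {perm 'I_K} := 1%g.

Definition A1 (alpha : 'I_K -> R) (chi : {perm 'I_K} -> 'I_K -> R) := forall L, reward alpha chi L <= reward alpha chi Rstar.
Definition A2 (chi : {perm 'I_K} -> 'I_K -> R) := forall (L L' : {perm 'I_K}) (k : 'I_K),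
  [set L p | p : 'I_K & (p < k)%N] = [set L' p | p : 'I_K & (p < k)%N] ->
  chi L k = chi L' k.
Definition A3 (chi : {perm 'I_K} -> 'I_K -> R) := forall (L : {perm 'I_K}) (k l : 'I_K),
  (k < l)%N -> chi L l <= chi L k.
Definition A4 (alpha : 'I_K -> R) (chi : {perm 'I_K} -> 'I_K -> R) := forall (L : {perm 'I_K}) (k l : 'I_K),
  (k < l)%N -> (alpha (L k) <= alpha (L l) <-> chi (swap_pos L k l) l <= chi L l).
Definition A5 (chi : {perm 'I_K} -> 'I_K -> R) := forall (L : {perm 'I_K}) (k : 'I_K),
  chi Rstar k <= chi L k.

Variable delta : R.

Definition thr (m : nat) : R := 2 * Num.sqrt (m%:R * ln (1 / delta)).
Definition unconf (s : int) (m : nat) : bool := (s%:~R <= thr m).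

Definition pair_items (L : {perm 'I_K}) (p : nat) : option ('I_K * 'I_K) :=
  match (insub p : option 'I_K), (insub p.+1 : option 'I_K) with
  | Some a, Some b => Some (L a, L b)
  | _, _ => None
  end.

Definition adj_swap (L : {perm 'I_K}) (p : nat) : {perm 'I_K} :=
  match (insub p : option 'I_K), (insub p.+1 : option 'I_K) with
  | Some a, Some b => swap_pos L a b
  | _, _ => L
  end.

Record state := State {
  Rbar : {perm 'I_K};
  sst : 'I_K -> 'I_K -> int;
  nst : 'I_K -> 'I_K -> nat }.

(* The pairs examined at time t are the 1-based positions (2k-1+h, 2k+h),
   k = 1..floor((K-h)/2), h = t mod 2, i.e. the 0-based positions (p, p+1)
   with p of the parity of t and p+1 < K. *)

(* displayed list R_t, built from Rbar_t with coin flips coin p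
   (coin p = true means "exchange", used only when allowed) *)
Definition displayed (t : nat) (st : state) (coin : nat -> bool) : {perm 'I_K} :=
  foldl (fun L p =>
    if odd p == odd t then
      match pair_items L p with
      | Some (i, j) => if unconf (sst st i j) (nst st i j) && coin p
                       then adj_swap L p else L
      | None => L
      end
    else L) (Rbar st) (iota 0 K).

Definition upd_s (s : 'I_K -> 'I_K -> int) (i j : 'I_K) (d : int) :=
  fun x y => if (x == i) && (y == j) then s x y + d
             else if (x == j) && (y == i) then s x y - d else s x y.
Definition upd_n (m : 'I_K -> 'I_K -> nat) (i j : 'I_K) :=
  fun x y => if ((x == i) && (y == j)) || ((x == j) && (y == i))
             then (m x y).+1 else m x y.

(* statistics update after observing clicks c (c p = click at 0-based pos p) *)
Definition upd_stats (t : nat) (L : {perm 'I_K}) (c : nat -> bool)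
  (sn : ('I_K -> 'I_K -> int) * ('I_K -> 'I_K -> nat)) :=
  foldl (fun sn p =>
    if odd p == odd t then
      match pair_items L p with
      | Some (i, j) =>
          if c p != c p.+1 then
            (upd_s sn.1 i j ((c p : nat)%:Z - (c p.+1 : nat)%:Z), upd_n sn.2 i j)
          else sn
      | None => sn
      end
    else sn) sn (iota 0 K).

Definition upd_Rbar (L : {perm 'I_K}) (s : 'I_K -> 'I_K -> int)
  (m : 'I_K -> 'I_K -> nat) : {perm 'I_K} :=
  foldl (fun L p =>
    match pair_items L p with
    | Some (i, j) => if ~~ unconf (s j i) (m j i) then adj_swap L p else L
    | None => L
    end) L (iota 0 K.-1).

Definition step (t : nat) (st : state) (coin : nat -> bool) (c : nat -> bool) : state :=
  let Rt := displayed t st coin in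
  let sn := upd_stats t Rt c (sst st, nst st) in
  State (upd_Rbar (Rbar st) sn.1 sn.2) sn.1 sn.2.

(* traj t = (Rbar_{t+1}, s_t, n_t); coin t p, click t p are the randomness
   and the observed clicks at time t (position p, 0-based). *)
Fixpoint traj (R0 : {perm 'I_K}) (coin click : nat -> nat -> bool) (t : nat)
  : state :=
  match t with
  | 0 => State R0 (fun _ _ => 0%Z) (fun _ _ => 0%N)
  | t'.+1 => step t (traj R0 coin click t') (coin t) (click t)
  end.

(* R_t, for t >= 1 *)
Definition Rdisp R0 coin click (t : nat) : {perm 'I_K} :=
  displayed t (traj R0 coin click t.-1) (coin t).

Definition inP R0 coin click (t : nat) (i j : 'I_K) : bool :=
  let st := traj R0 coin click t.-1 in
  let pi := (val ((Rbar st)^-1 i)%g) in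
  let pj := (val ((Rbar st)^-1 j)%g) in
  [&& (i < j)%N, (pi.+1 == pj) || (pj.+1 == pi) & unconf (sst st i j) (nst st i j)].

Definition eventE (alpha : 'I_K -> R) R0 coin click (hor : nat) : Prop :=
  forall t : nat, (1 <= t <= hor)%N ->
    let st := traj R0 coin click t in
    (forall i j : 'I_K, (i < j)%N ->
       (alpha i - alpha j) / (alpha i + alpha j) * (nst st i j)%:R
         - thr (nst st i j) <= (sst st i j)%:~R) /\
    (forall i j : 'I_K, (j < i)%N -> (sst st i j)%:~R <= thr (nst st i j)).

End BubbleRank.

(* On the event E no pair i < j is ever judged inverted, so the bubble pass only
   exchanges an inverted adjacent pair, and a pair i < j on which BubbleRank is
   confident is sorted in the base list Rbar_t.  Either the pair was already
   sorted, and exchanging inverted adjacent pairs keeps it so, or it became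
   confident at this very step: then i and j were compared at adjacent positions
   (q, q+1) of the current parity, and if j sits at q the pass carries i above j,
   because every item above j is still uncertain with respect to j (at this step
   j was compared with i only).

   Hence every adjacent inversion of Rbar_t is a pair of P_t, and telescoping
   along Rbar_t together with a pigeonhole argument gives
   alpha(p) - alpha(Rbar_t(q)) <= G for q <= p, where G is the sum of the gaps
   alpha(i) - alpha(j) over P_t.  The displayed list only exchanges disjoint
   adjacent uncertain pairs of Rbar_t, which costs one more G, and A3, A5 turn
   the per-position bound 2G into a regret bound 2 K chi_max G. *)

From HB Require Import structures.
From mathcomp Require Import all_boot all_order fingroup perm all_algebra.
From mathcomp Require Import reals exp.
From mathcomp Require Import zify lra.
Set Implicit Arguments. Unset Strict Implicit. Unset Printing Implicit Defensive.
Import Order.TTheory GRing.Theory Num.Theory.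
Local Open Scope ring_scope.

Section Lists.
Variable K : nat.
Implicit Types (L : {perm 'I_K}).

Lemma swap_posE L (a b w : 'I_K) : swap_pos L a b w = L (tperm a b w).
Proof. by rewrite /swap_pos permM. Qed.

Lemma swap_posV L (a b w : 'I_K) :
  (swap_pos L a b)^-1%g w = tperm a b (L^-1%g w).
Proof. by rewrite /swap_pos invMg permM tpermV. Qed.

Lemma adj_swapE L (p p1 : 'I_K) :
  p1 = p.+1 :> nat -> adj_swap L p = swap_pos L p p1.
Proof. by move=> hp1; rewrite /adj_swap valK -hp1 valK. Qed.

Lemma pair_itemsE L (p p1 : 'I_K) :
  p1 = p.+1 :> nat -> pair_items L p = Some (L p, L p1).
Proof. by move=> hp1; rewrite /pair_items valK -hp1 valK. Qed.

Lemma pair_items_out L p : (K <= p.+1)%N -> pair_items L p = None.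
Proof.
move=> hp; rewrite /pair_items (@insubF _ _ _ p.+1); first by case: insub.
by rewrite ltnNge hp.
Qed.

Lemma pair_itemsP L p i j : pair_items L p = Some (i, j) ->
  exists p0 p1 : 'I_K, [/\ p0 = p :> nat, p1 = p.+1 :> nat, i = L p0 & j = L p1].
Proof.
case: (ltnP p.+1 K) => [hp|hp]; last by rewrite pair_items_out.
rewrite (@pair_itemsE L (Ordinal (ltnW hp)) (Ordinal hp)) // => -[<- <-].
by exists (Ordinal (ltnW hp)), (Ordinal hp).
Qed.

Lemma tperm_adjacent_ltn (p p1 x y : 'I_K) : p1 = p.+1 :> nat ->
  (x < y)%N -> (x, y) != (p, p1) -> (tperm p p1 x < tperm p p1 y)%N.
Proof.
move=> hp1 hxy hne; rewrite !permE /=.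
have vne (a b : 'I_K) : a != b -> (a : nat) <> b by move=> /eqP ne /val_inj.
case: (eqVneq x p) => [ex|/vne nxp]; case: (eqVneq x p1) => [ex1|/vne nxp1];
case: (eqVneq y p) => [ey|/vne nyp]; case: (eqVneq y p1) => [ey1|/vne nyp1];
  subst => //=; rewrite ?eqxx // in hne *; simpl in *; lia.
Qed.

End Lists.

Section BubblePass.
Variables (R : realType) (K : nat) (delta : R).
Variables (s : 'I_K -> 'I_K -> int) (n : 'I_K -> 'I_K -> nat).
Hypothesis unconf_inverted :
  forall a b : 'I_K, (a < b)%N -> unconf delta (s b a) (n b a).
Implicit Types (L : {perm 'I_K}).

Definition bubble_step L p : {perm 'I_K} :=
  match pair_items L p with
  | Some (i, j) => if ~~ unconf delta (s j i) (n j i) then adj_swap L p else L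
  | None => L
  end.

Lemma upd_RbarE L : upd_Rbar delta L s n = foldl bubble_step L (iota 0 K.-1).
Proof. by []. Qed.

Lemma bubble_stepP L p : bubble_step L p = L \/ exists p0 p1 : 'I_K,
  [/\ p0 = p :> nat, p1 = p.+1 :> nat, (L p1 < L p0)%N,
      ~~ unconf delta (s (L p1) (L p0)) (n (L p1) (L p0)) &
      bubble_step L p = swap_pos L p0 p1].
Proof.
case: (ltnP p.+1 K) => [hp|hp]; last by left; rewrite /bubble_step pair_items_out.
set p0 := Ordinal (ltnW hp); set p1 := Ordinal hp.
rewrite /bubble_step (@pair_itemsE _ L p0 p1) //.
case: ifP => hc; [right; exists p0, p1 | by left].
split=> //; last by rewrite (@adj_swapE _ L p0 p1).
case: ltngtP => [//|hlt|/val_inj/perm_inj/(congr1 (@nat_of_ord K)) /=]; last lia.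
by rewrite unconf_inverted in hc.
Qed.

Lemma bubble_pass_ordered ps L (i j : 'I_K) : (i < j)%N ->
  (L^-1%g i < L^-1%g j)%N ->
  ((foldl bubble_step L ps)^-1%g i < (foldl bubble_step L ps)^-1%g j)%N.
Proof.
move=> hij; elim: ps L => //= p ps IH L hL; apply: IH.
case: (bubble_stepP L p) => [->//|[p0 [p1 [h0 h1 hlt _ ->]]]].
rewrite !swap_posV; apply: tperm_adjacent_ltn; rewrite ?h0 ?h1 //.
by apply: contraTneq hlt => -[<- <-]; rewrite !permKV -leqNgt ltnW.
Qed.

Lemma bubble_steps_beyond a m L (w : 'I_K) : (a + m < w)%N ->
  foldl bubble_step L (iota a m) w = L w.
Proof.
elim: m a L => [//|m IH] a L hw /=; rewrite IH; last lia.
case: (bubble_stepP L a) => [->//|[p0 [p1 [h0 h1 _ _ ->]]]].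
by rewrite swap_posE tpermD // -val_eqE /= ?h0 ?h1; apply/eqP; lia.
Qed.

Lemma bubble_steps_keep L (q j : 'I_K) m : L q = j ->
  (forall x, (L^-1%g x < q)%N -> unconf delta (s j x) (n j x)) ->
  (m <= q)%N -> foldl bubble_step L (iota 0 m) q = j.
Proof.
move=> hq hx; elim: m => [//|m IH] hm.
rewrite -addn1 iotaD foldl_cat /=; set Lm := foldl bubble_step L (iota 0 m).
have Lmq : Lm q = j by apply: IH; lia.
case: (bubble_stepP Lm m) => [->//|[p0 [p1 [h0 h1 _ hc ->]]]].
rewrite swap_posE.
case: (ltnP m.+1 q) => hmq.
  by rewrite tpermD // -val_eqE /= ?h0 ?h1; apply/eqP; lia.
have ep1 : p1 = q by apply: val_inj; rewrite /= h1; lia.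
rewrite ep1 Lmq in hc; set x := Lm p0 in hc.
(* positions >= q are untouched by steps < q, so x comes from above q in L *)
suff : (L^-1%g x < q)%N by move/hx; rewrite (negbTE hc).
rewrite ltnNge; apply/negP => hle.
have : Lm (L^-1%g x) = L (L^-1%g x) by apply: bubble_steps_beyond; lia.
by rewrite permKV {2}/x => /perm_inj/(congr1 (@nat_of_ord K)); lia.
Qed.

Lemma bubble_pass_sorts_adjacent L (q q1 i j : 'I_K) : q1 = q.+1 :> nat ->
  L q = j -> L q1 = i -> (i < j)%N -> ~~ unconf delta (s i j) (n i j) ->
  (forall x, (L^-1%g x < q)%N -> unconf delta (s j x) (n j x)) ->
  ((foldl bubble_step L (iota 0 K.-1))^-1%g i <
   (foldl bubble_step L (iota 0 K.-1))^-1%g j)%N.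
Proof.
move=> hq1 hq hq1' hij hc hx.
have qK : (q < K.-1)%N by have := ltn_ord q1; rewrite hq1; lia.
have -> : iota 0 K.-1 = iota 0 q ++ iota q (K.-1 - q.+1).+1.
  by rewrite -iotaD; congr iota; lia.
rewrite foldl_cat /=; set Lq := foldl bubble_step L (iota 0 q).
have Lq1 : Lq q1 = i by rewrite /Lq bubble_steps_beyond // add0n hq1.
have Lq0 : Lq q = j by exact: bubble_steps_keep.
apply: bubble_pass_ordered => //.
rewrite /bubble_step (@pair_itemsE _ Lq q q1) // Lq0 Lq1 hc (adj_swapE _ hq1).
by rewrite !swap_posV -Lq0 -Lq1 !permK tpermL tpermR hq1.
Qed.

End BubblePass.

Lemma odd_succ_neq (a b : nat) : odd a = odd b -> b <> a.+1.
Proof. by move=> + hb; rewrite hb /=; case: (odd a). Qed.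

Section Display.
Variables (R : realType) (K : nat) (delta : R).
Variables (t : nat) (st : state K) (coin : nat -> bool).
Local Notation Rb := (Rbar st).
Local Notation unsure i j := (unconf delta (sst st i j) (nst st i j)).
Implicit Types (L : {perm 'I_K}).

Definition display_step L p : {perm 'I_K} :=
  if odd p == odd t then
    match pair_items L p with
    | Some (i, j) => if unsure i j && coin p then adj_swap L p else L
    | None => L
    end
  else L.

Lemma displayedE : displayed delta t st coin = foldl display_step Rb (iota 0 K).
Proof. by []. Qed.

Definition swapped_before m L := forall w : 'I_K, L w = Rb w \/ exists q q1 : 'I_K,
  [/\ q1 = q.+1 :> nat, odd q = odd t, (q < m)%N, w = q \/ w = q1 &
      [/\ L q = Rb q1, L q1 = Rb q & unsure (Rb q) (Rb q1)]].

Lemma swapped_before_mon m L : swapped_before m L -> swapped_before m.+1 L.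
Proof.
move=> hL w; case: (hL w) => [|[q [q1 [? ? hq ? ?]]]]; first by left.
by right; exists q, q1; split=> //; apply: ltnW.
Qed.

Lemma swapped_before_untouched m L (p0 p1 : 'I_K) : swapped_before m L ->
  p0 = m :> nat -> p1 = m.+1 :> nat -> odd m = odd t ->
  L p0 = Rb p0 /\ L p1 = Rb p1.
Proof.
move=> hL h0 h1 hm; split.
  case: (hL p0) => // -[q [q1 [hq1 hq hqm [] /(congr1 (@nat_of_ord K)) e _]]]; first lia.
  by case: (odd_succ_neq (etrans hq (esym hm))); lia.
by case: (hL p1) => // -[q [q1 [hq1 _ hqm [] /(congr1 (@nat_of_ord K)) e _]]]; lia.
Qed.

Lemma swapped_before_step m L :
  swapped_before m L -> swapped_before m.+1 (display_step L m).
Proof.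
move=> hL; rewrite /display_step; case: eqP => hm; last exact: swapped_before_mon.
case: (ltnP m.+1 K) => [hK|hK]; last first.
  by rewrite pair_items_out //; apply: swapped_before_mon.
set p0 := Ordinal (ltnW hK); set p1 := Ordinal hK.
have [e0 e1] := @swapped_before_untouched m L p0 p1 hL erefl erefl hm.
rewrite (@pair_itemsE _ L p0 p1) // e0 e1.
case: ifP => [/andP[hu _]|_]; last exact: swapped_before_mon.
rewrite (@adj_swapE _ L p0 p1) // => w.
have [wp|] := boolP ((w == p0) || (w == p1)).
  right; exists p0, p1; split=> //; first by case/orP: wp => /eqP ->; [left|right].
  by rewrite !swap_posE tpermL tpermR e0 e1.
rewrite negb_or => /andP[nw0 nw1]; rewrite swap_posE tpermD 1?eq_sym //.
case: (hL w) => [->|[q [q1 [hq1 hq hqm hw hsw]]]]; [by left | right].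
have hq1m : (q1 < m)%N.
  by have := @odd_succ_neq q m (etrans hq (esym hm)); lia.
exists q, q1; split=> //; first exact: ltnW.
by rewrite !swap_posE !tpermD // -val_eqE /=; apply/eqP; lia.
Qed.

Lemma swapped_before_foldl r m L : swapped_before m L ->
  swapped_before (m + r) (foldl display_step L (iota m r)).
Proof.
elim: r m L => [|r IH] m L hL /=; first by rewrite addn0.
by rewrite -addSnnS; apply/IH/swapped_before_step.
Qed.

Lemma displayed_swapped : swapped_before K (displayed delta t st coin).
Proof. by rewrite displayedE; apply: (@swapped_before_foldl K 0) => w; left. Qed.

Lemma displayed_pairP (q q1 : 'I_K) : q1 = q.+1 :> nat -> odd q = odd t ->
  let D := displayed delta t st coin in
  (D q = Rb q /\ D q1 = Rb q1) \/ (D q = Rb q1 /\ D q1 = Rb q).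
Proof.
move=> hq1 hq D; have hD := displayed_swapped; rewrite -/D in hD.
have pair_eq (a a1 : 'I_K) : a1 = a.+1 :> nat -> a = q :> nat -> a = q /\ a1 = q1.
  by move=> ha1 ha; split; apply: val_inj => /=; lia.
case: (hD q) => [e0|[a [a1 [ha1 ha _ hqa [f0 f1 _]]]]].
- left; split=> //.
  case: (hD q1) => // -[a [a1 [ha1 ha _ hqa [f0 _ _]]]].
  case: hqa => /(congr1 (@nat_of_ord K)) e.
    by case: (odd_succ_neq (etrans hq (esym ha))); lia.
  have [ea ea1] : a = q /\ a1 = q1 by apply: pair_eq => //; lia.
  by move: f0; rewrite ea ea1 e0 => /perm_inj/(congr1 (@nat_of_ord K)); lia.
- case: hqa => /(congr1 (@nat_of_ord K)) e.
    by have [ea ea1] := pair_eq a a1 ha1 (esym e); right; rewrite -ea -ea1.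
  by case: (odd_succ_neq (etrans ha (esym hq))); lia.
Qed.

End Display.

Section Stats.
Variables (K t : nat) (L : {perm 'I_K}) (c : nat -> bool).
Local Notation stats := (('I_K -> 'I_K -> int) * ('I_K -> 'I_K -> nat))%type.

Definition stats_step (sn : stats) p : stats :=
  if odd p == odd t then
    match pair_items L p with
    | Some (i, j) =>
        if c p != c p.+1 then
          (upd_s sn.1 i j ((c p : nat)%:Z - (c p.+1 : nat)%:Z), upd_n sn.2 i j)
        else sn
    | None => sn
    end
  else sn.

Lemma stats_steps_local ps sn x y : let r := foldl stats_step sn ps in
  (r.1 x y = sn.1 x y /\ r.2 x y = sn.2 x y) \/ exists q q1 : 'I_K,
  [/\ q1 = q.+1 :> nat, odd q = odd t &
      (x = L q /\ y = L q1) \/ (x = L q1 /\ y = L q)].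
Proof.
elim: ps sn => [|p ps IH] sn /=; first by left.
case: (IH (stats_step sn p)) => [[-> ->]|]; last by right.
rewrite /stats_step; case: eqP => hp; last by left.
case E: pair_items => [[i j]|]; last by left.
case: ifP => _; last by left.
have [p0 [p1 [h0 h1 -> ->]]] := pair_itemsP E.
have [/andP[/eqP -> /eqP ->]|n1] := boolP ((x == L p0) && (y == L p1)).
  by right; exists p0, p1; rewrite h0 h1; split=> //; left.
have [/andP[/eqP -> /eqP ->]|n2] := boolP ((x == L p1) && (y == L p0)).
  by right; exists p0, p1; rewrite h0 h1; split=> //; right.
by left; rewrite /upd_s /upd_n /= (negbTE n1) (negbTE n2).
Qed.

End Stats.

Section Invariant.
Variables (R : realType) (K : nat) (delta : R).
Local Notation unsure st i j := (unconf delta (sst st i j) (nst st i j)).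

Definition confident_sorted (st : state K) := forall i j : 'I_K, (i < j)%N ->
  ~~ unsure st i j -> ((Rbar st)^-1%g i < (Rbar st)^-1%g j)%N.

Lemma step_stats_local t st cn ck x y :
  (sst (step delta t st cn ck) x y = sst st x y /\
   nst (step delta t st cn ck) x y = nst st x y) \/ exists q q1 : 'I_K,
  [/\ q1 = q.+1 :> nat, odd q = odd t &
      (x = Rbar st q /\ y = Rbar st q1) \/ (x = Rbar st q1 /\ y = Rbar st q)].
Proof.
set D := displayed delta t st cn.
have [|[q [q1 [hq1 hq hxy]]]] := stats_steps_local t D ck (iota 0 K) (sst st, nst st) x y.
  by left.
right; exists q, q1; split=> //.
case: (displayed_pairP delta st cn hq1 hq) => -[e0 e1];
  by move: hxy; rewrite -/D e0 e1; tauto.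
Qed.

Lemma step_unsure_above t st cn ck (q q1 : 'I_K) x : confident_sorted st ->
  q1 = q.+1 :> nat -> odd q = odd t -> ((Rbar st)^-1%g x < q)%N ->
  (forall a b : 'I_K, (a < b)%N -> unsure (step delta t st cn ck) b a) ->
  unsure (step delta t st cn ck) (Rbar st q) x.
Proof.
move=> hI hq1 hq hx hE2.
case: (ltngtP x (Rbar st q)) => [hxj|hjx|/val_inj ex]; first exact: hE2.
- have ho : unsure st (Rbar st q) x.
    by apply/negPn/negP => /(hI _ _ hjx); rewrite permK; lia.
  have [[-> ->] //|[q' [q1' [hq1' hq' [] [/perm_inj eqj ex]]]]] :=
    step_stats_local t st cn ck (Rbar st q) x.
  + by move: hx; rewrite ex permK; move/(congr1 (@nat_of_ord K)): eqj; lia.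
  + move/(congr1 (@nat_of_ord K)): eqj => eqj.
    by case: (odd_succ_neq (etrans hq' (esym hq))); lia.
- by move: hx; rewrite ex permK ltnn.
Qed.

Lemma confident_sorted_step t st cn ck : confident_sorted st ->
  (forall a b : 'I_K, (a < b)%N -> unsure (step delta t st cn ck) b a) ->
  confident_sorted (step delta t st cn ck).
Proof.
move=> hI hE2 i j hij hc.
set sn := upd_stats t (displayed delta t st cn) ck (sst st, nst st).
have -> : Rbar (step delta t st cn ck) = upd_Rbar delta (Rbar st) sn.1 sn.2 by [].
rewrite upd_RbarE.
case: (ltngtP ((Rbar st)^-1%g i) ((Rbar st)^-1%g j)) => hpos.
- exact: bubble_pass_ordered.
- have ho : unsure st i j by apply/negPn/negP => /(hI _ _ hij); lia.
  case: (step_stats_local t st cn ck i j) => [[e1 e2]|[q [q1 [hq1 hq]]]].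
    by move: hc; rewrite e1 e2 ho.
  (* (i, j) became confident at this step, comparing positions (q, q + 1) *)
  case=> -[ei ej]; first by move: hpos; rewrite ei ej !permK; lia.
  rewrite ei ej in hij hc *.
  apply: (bubble_pass_sorts_adjacent hE2 hq1) => // x hx.
  exact: (step_unsure_above hI hq1).
- by move: hij; rewrite (perm_inj (val_inj hpos)) ltnn.
Qed.

Lemma confident_sorted_traj alpha R0 coin click hor :
  eventE delta alpha R0 coin click hor ->
  forall m, (m <= hor)%N -> confident_sorted (traj delta R0 coin click m).
Proof.
move=> hE; elim=> [|m IH] hm.
  by move=> i j _; rewrite /unconf /thr mul0r sqrtr0 mulr0 lexx.
apply: confident_sorted_step; first by apply: IH; lia.
have [|_ hE2] := hE m.+1; first lia.
by move=> a b hab; apply: hE2.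
Qed.

End Invariant.

Lemma perm_item_le_at_pos_ge n (L : {perm 'I_n}) (q : 'I_n) :
  exists2 i : 'I_n, (i <= q)%N & (q <= L^-1%g i)%N.
Proof.
have [/exists_inP[i hiq hqi]|/exists_inPn hlow] :=
  boolP [exists (i : 'I_n | (i <= q)%N), (q <= L^-1%g i)%N]; first by exists i.
have hf (x : 'I_q.+1) : (L^-1%g (widen_ord (ltn_ord q) x) < q)%N.
  by rewrite ltnNge hlow // unfold_in /= -ltnS ltn_ord.
pose f x := Ordinal (hf x).
have f_inj : injective f.
  by move=> x y /(congr1 val) /= /val_inj /perm_inj /(congr1 val) /= /val_inj.
by have := leq_card f f_inj; rewrite !card_ord ltnn.
Qed.

Section Regret.
Variables (R : realType) (k : nat) (delta : R).
Local Notation K := k.+1.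
Variable alpha : 'I_K -> R.
Hypothesis alpha_decr : forall i j : 'I_K, (i < j)%N -> alpha j < alpha i.
Variable st : state K.
Hypothesis st_sorted : confident_sorted delta st.
Local Notation Rb := (Rbar st).

(* (i, j) \in P_(t+1) for st = traj t; unfolds to [inP] *)
Definition unsure_adjacent (i j : 'I_K) : bool :=
  let pi := val (Rb^-1%g i) in
  let pj := val (Rb^-1%g j) in
  [&& (i < j)%N, (pi.+1 == pj) || (pj.+1 == pi) &
      unconf delta (sst st i j) (nst st i j)].

Definition gap i j := (unsure_adjacent i j)%:R * (alpha i - alpha j).

Definition gap_sum := \sum_(i < K) \sum_(j < K | (i < j)%N) gap i j.

Lemma gap_ge0 i j : 0 <= gap i j.
Proof.
rewrite /gap; have [/and3P[hij _ _]|_] := boolP (unsure_adjacent i j).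
  by rewrite mul1r subr_ge0 ltW ?alpha_decr.
by rewrite mul0r.
Qed.

Lemma gap_sum_ge0 : 0 <= gap_sum.
Proof. by do 2!apply: sumr_ge0 => ? _; apply: gap_ge0. Qed.

Lemma gap_le_row i j : gap i j <= \sum_(j' < K | (i < j')%N) gap i j'.
Proof.
have [hij|hji] := ltnP i j.
  by rewrite (bigD1 j) //= lerDl sumr_ge0 // => ? _; apply: gap_ge0.
rewrite /gap /unsure_adjacent ltnNge hji mul0r.
by apply: sumr_ge0 => ? _; apply: gap_ge0.
Qed.

Lemma gap_le_sum i j : gap i j <= gap_sum.
Proof.
apply: le_trans (gap_le_row i j) _; rewrite /gap_sum [X in _ <= X](bigD1 i) //= lerDl.
by do 2!apply: sumr_ge0 => ? _; apply: gap_ge0.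
Qed.

Lemma alpha_sub_le_gap x y :
  ((Rb^-1%g x).+1 == Rb^-1%g y) || ((Rb^-1%g y).+1 == Rb^-1%g x) ->
  ((x < y)%N -> unconf delta (sst st x y) (nst st x y)) ->
  alpha x - alpha y <= gap x y.
Proof.
move=> hadj hu; case: (ltngtP x y) => [hxy|hyx|/val_inj ->].
- by rewrite /gap /unsure_adjacent hxy hadj hu // mul1r.
- by apply: le_trans (gap_ge0 x y); rewrite subr_le0 ltW ?alpha_decr.
- by rewrite subrr gap_ge0.
Qed.

Definition alpha_at (w : nat) := alpha (Rb (inord w)).

Definition gap_at (w : nat) := gap (Rb (inord w.+1)) (Rb (inord w)).

Lemma alpha_at_succ_le w : (w < k)%N -> alpha_at w.+1 - alpha_at w <= gap_at w.
Proof.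
move=> hw; apply: alpha_sub_le_gap.
  by rewrite !permK !inordK ?eqxx ?orbT //; lia.
move=> hxy; apply/negPn/negP => /(st_sorted hxy); rewrite !permK !inordK //; lia.
Qed.

Lemma gap_at_sum_le : \sum_(w < k) gap_at w <= gap_sum.
Proof.
pose above (i : 'I_K) := Rb (inord (Rb^-1%g i).-1).
apply: le_trans (_ : \sum_(i < K) gap i (above i) <= _); last first.
  by apply: ler_sum => i _; apply: gap_le_row.
rewrite (reindex_inj (@perm_inj _ Rb)) big_ord_recl /above permK /=.
have -> : inord 0 = ord0 :> 'I_K by apply: val_inj; rewrite /= inordK.
rewrite {1}/gap /unsure_adjacent ltnn mul0r add0r le_eqVlt; apply/orP; left.
apply/eqP/eq_bigr => w _; rewrite permK /gap_at.
by congr (gap (Rb _) (Rb _)); apply: val_inj; rewrite /= ?inordK // ltnS.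
Qed.

Lemma alpha_at_sub_le u v : (u <= v <= k)%N -> alpha_at v - alpha_at u <= gap_sum.
Proof.
case/andP=> huv hvk; apply: le_trans gap_at_sum_le.
rewrite -telescope_sumr // (big_nat_widen _ _ k) // big_geq_mkord big_mkcond /=.
apply: ler_sum => w _; case: ifP => [_|_]; last exact: gap_ge0.
exact: alpha_at_succ_le.
Qed.

Lemma alpha_sub_at_le (q p : 'I_K) : (q <= p)%N -> alpha p - alpha (Rb q) <= gap_sum.
Proof.
move=> hqp; have [i hiq hqi] := perm_item_le_at_pos_ge Rb q.
have hpi : alpha p <= alpha i.
  have [/alpha_decr/ltW //|hpi] := ltnP i p.
  by rewrite (_ : i = p) //; apply: val_inj => /=; lia.
apply: (@le_trans _ _ (alpha i - alpha (Rb q))); first by rewrite lerD2r.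
have := @alpha_at_sub_le q (Rb^-1%g i); rewrite /alpha_at !inord_val permKV.
by apply; rewrite hqi -ltnS ltn_ord.
Qed.

Lemma alpha_sub_displayed_le t coin (p : 'I_K) :
  alpha p - alpha (displayed delta t st coin p) <= gap_sum + gap_sum.
Proof.
have hG := gap_sum_ge0.
case: (displayed_swapped delta t st coin p) => [->|[q [q1 [hq1 _ _ hp [e0 e1 hu]]]]].
  by apply: le_trans (alpha_sub_at_le (leqnn p)) _; rewrite lerDl.
case: hp => ->; last first.
  rewrite e1; apply: le_trans (alpha_sub_at_le (_ : q <= q1)%N) _; last by rewrite lerDl.
  by rewrite hq1.
have h1 := alpha_sub_at_le (leqnn q).
have h2 : alpha (Rb q) - alpha (Rb q1) <= gap_sum.
  apply: le_trans (gap_le_sum (Rb q) (Rb q1)); apply: alpha_sub_le_gap => [|_ //].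
  by rewrite !permK hq1 eqxx.
rewrite e0; lra.
Qed.

End Regret.

Lemma regret_le_of_alpha_drop (R : realType) n (alpha : 'I_n -> R)
    (chi : {perm 'I_n} -> 'I_n -> R) (D : {perm 'I_n}) (o : 'I_n) (B : R) :
  o = 0%N :> nat -> (forall i, 0 <= alpha i) -> (forall L p, 0 <= chi L p) ->
  A3 chi -> A5 chi -> 0 <= B -> (forall p, alpha p - alpha (D p) <= B) ->
  \sum_(p < n) (chi (Rstar n) p * alpha p - chi D p * alpha (D p))
    <= n%:R * chi (Rstar n) o * B.
Proof.
move=> ho alpha_ge0 chi_ge0 hA3 hA5 hB hdrop.
rewrite -mulrA mulr_natl -[X in _ *+ X]card_ord -sumr_const.
apply: ler_sum => p _.
have chi_le : chi (Rstar n) p <= chi (Rstar n) o.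
  have [hp|hp] := posnP p; last by apply: hA3; rewrite ho.
  by rewrite (_ : p = o) //; apply: val_inj => /=; rewrite hp ho.
have := hA5 D p; have := hdrop p; have := alpha_ge0 (D p); have := chi_ge0 (Rstar n) p.
nra.
Qed.

Theorem lemma4 (R : realType) (K : nat) (hK : (0 < K)%N)
  (alpha : 'I_K -> R) (chi : {perm 'I_K} -> 'I_K -> R)
  (alpha_range : forall i, 0 <= alpha i <= 1)
  (chi_range : forall L k, 0 <= chi L k <= 1)
  (hA1 : A1 alpha chi) (hA2 : A2 chi) (hA3 : A3 chi) (hA4 : A4 alpha chi)
  (hA5 : A5 chi)
  (alpha_decr : forall i j : 'I_K, (i < j)%N -> alpha j < alpha i)
  (alpha_pos : forall i, 0 < alpha i)
  (delta : R) (hdelta : 0 < delta < 1)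
  (R0 : {perm 'I_K}) (hor : nat) (coin click : nat -> nat -> bool) :
  eventE delta alpha R0 coin click hor ->
  forall t : nat, (1 <= t <= hor)%N ->
    let Rt := Rdisp delta R0 coin click t in
    \sum_(k < K) (chi (Rstar K) k * alpha k - chi Rt k * alpha (Rt k))
    <= 3 * K%:R * chi (Rstar K) (Ordinal hK) *
       \sum_(i < K) \sum_(j < K | (i < j)%N)
          (inP delta R0 coin click t i j)%:R * (alpha i - alpha j).
Proof.
move: K hK alpha chi alpha_range chi_range hA1 hA2 hA3 hA4 hA5 alpha_decr alpha_pos R0.
case=> [//|k] hK alpha chi alpha_range chi_range _ _ hA3 _ hA5 alpha_decr _ R0 hE t ht.
set st := traj delta R0 coin click t.-1.
have st_sorted : confident_sorted delta st by apply: (confident_sorted_traj hE); lia.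
set G := gap_sum delta alpha st; set c := chi (Rstar k.+1) (Ordinal hK).
have hG : 0 <= G by apply: gap_sum_ge0.
have hc : 0 <= c by case/andP: (chi_range (Rstar _) (Ordinal hK)).
(* the argument gives the constant 2 in place of 3 *)
apply: (@le_trans _ _ (k.+1%:R * c * (G + G))).
  apply: regret_le_of_alpha_drop => //.
  - by move=> i; case/andP: (alpha_range i).
  - by move=> L p; case/andP: (chi_range L p).
  - by rewrite addr_ge0.
  - exact: alpha_sub_displayed_le.
change (k.+1%:R * c * (G + G) <= 3 * k.+1%:R * c * G).
have : 0 <= k.+1%:R * c * G by rewrite !mulr_ge0.
lra.
Qed.
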